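(* Let $V\subset A_N$ be a maximal totally singular subspace. Then $f_V\in\mathbb C[A_N]^{SL(2,\mathbb Z)}$, and $f_V$ is, up to a constant multiple, the unique vector of $\mathbb C[A_N]$ on which every transvection $t_\alpha$ with $\alpha\in V$, $q_N(\alpha)=1$, acts as $-1$.
   Context: $N=U\oplus U(2)\oplus D_4\oplus D_4$ ($U$ hyperbolic plane, $D_4$ negative definite, $U(2)$ doubled form); $A_N=N^*/N\cong\mathbb F_2^6$ with $q_N(x)=\langle x,x\rangle\bmod2\mathbb Z\in\mathbb Z/2\mathbb Z$, bilinear form $b_N(x,y)=2\langle x,y\rangle\bmod2$; $(A_N,q_N)\cong u^{\oplus3}$ with $u$ the hyperbolic plane over $\mathbb F_2$. Weil representation on $\mathbb C[A_N]$ (basis $e_\alpha$): $Te_\alpha=(-1)^{q_N(\alpha)}e_\alpha$, $Se_\alpha=\frac18\sum_\beta(-1)^{b_N(\beta,\alpha)}e_\beta$ for $T=\begin{pmatrix}1&1\\0&1\end{pmatrix}$, $S=\begin{pmatrix}0&-1\\1&0\end{pmatrix}$. $O(q_N)$ acts on $\mathbb C[A_N]$ by $g(e_\alpha)=e_{g(\alpha)}$. For $\alpha$ with $q_N(\alpha)=1$ the transvection is $t_\alpha(x)=x+b_N(x,\alpha)\alpha\in O(q_N)$. A 3-dimensional subspace $V\subset A_N$ is maximal totally singular if $(V,q_N|_V)\cong(\mathbb F_2^3,\ x\mapsto x_1+x_2+x_3)$. For such $V$, $I=\ker(q_N|_V)$ is a 2-dimensional totally isotropic subspace, contained in exactly two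 maximal (3-dimensional) totally isotropic subspaces $I^+,I^-$, and $f_V:=\sum_{\alpha\in I^+}e_\alpha-\sum_{\alpha\in I^-}e_\alpha$ (defined up to sign). *)

From HB Require Import structures.
From mathcomp Require Import all_boot all_order all_algebra all_field.
Set Implicit Arguments. Unset Strict Implicit. Unset Printing Implicit Defensive.
Import Order.TTheory GRing.Theory Num.Theory.
Local Open Scope ring_scope.

(* The discriminant form (A_N, q_N) modelled as u^{+3} over F_2:
   A_N = F_2^6 (row vectors), q(x) = x0 x1 + x2 x3 + x4 x5. *)
Notation AN := 'rV['F_2]_6.

Definition qN (x : AN) : 'F_2 :=
  x 0 0 * x 0 1 + x 0 2 * x 0 3 + x 0 4 * x 0 5.

Definition bN (x y : AN) : 'F_2 := qN (x + y) - qN x - qN y.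

Definition sgn2 (a : 'F_2) : algC := if a == 0 then 1 else -1.

(* C[A_N]: coefficient functions f = sum_alpha f(alpha) e_alpha *)
Notation CA := {ffun AN -> algC}.

Definition weilT (f : CA) : CA := [ffun a => sgn2 (qN a) * f a].
Definition weilS (f : CA) : CA :=
  [ffun b => 8%:R^-1 * \sum_(a : AN) sgn2 (bN b a) * f a].

(* Invariance under SL(2,Z) (generated by S and T) *)
Definition SL2Z_invariant (f : CA) : Prop := weilS f = f /\ weilT f = f.

(* Permutation action g(e_a) = e_{g a} of a map g on C[A_N] *)
Definition actA (g : AN -> AN) (f : CA) : CA :=
  [ffun b => \sum_(a : AN | g a == b) f a].

Definition transv (al : AN) (x : AN) : AN := x + bN x al *: al.

(* Subspaces of A_N are represented by square matrices (row spaces, %MS). *)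
Definition max_tot_singular (V : 'M['F_2]_6) : Prop :=
  exists phi : 'M['F_2]_(3, 6),
    [/\ row_free phi, (phi == V)%MS &
        forall a : 'rV['F_2]_3, qN (a *m phi) = a 0 0 + a 0 1 + a 0 2].

Definition max_tot_isotropic (W : 'M['F_2]_6) : Prop :=
  \rank W = 3%N /\ forall x : AN, (x <= W)%MS -> qN x = 0.

Definition contains_kerq (V W : 'M['F_2]_6) : Prop :=
  forall x : AN, (x <= V)%MS -> qN x = 0 -> (x <= W)%MS.

(* f_V = sum_{a in I+} e_a - sum_{a in I-} e_a *)
Definition fV (Wp Wm : 'M['F_2]_6) : CA :=
  [ffun a => (if (a <= Wp)%MS then 1 else 0) - (if (a <= Wm)%MS then 1 else 0)].

From HB Require Import structures.
From mathcomp Require Import all_boot all_order all_algebra all_field.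
From mathcomp Require Import ring.
Import Order.TTheory GRing.Theory Num.Theory.
Local Open Scope ring_scope.
Set Implicit Arguments. Unset Strict Implicit.

(* The polar form [bN] is nondegenerate, so a maximal totally isotropic [W] is
   its own orthogonal: the character sum of [bN b] over [W] is [#|W| = 8] or [0]
   according as [b] lies in [W] or not, hence [S] fixes the indicator of [W];
   [T] fixes it because [qN] vanishes on [W].
   For the transvections [t_a] (a in V, qN a = 1), note that [V = I + <a>] is its
   own orthogonal too.  A vector of [I^+] orthogonal to [a] lies in [V], hence in
   [I]; the other vectors of [I^+] are moved by [t_a] into [I^-], and vice versa,
   so [t_a] negates [f_V].  Conversely, a function negated by all [t_a] vanishes
   at the points fixed by some [t_a]; every other point is [p + v] with [v] in
   [V], for a fixed [p] in [I^+ \ I^-], and is reached from [p] by at most two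
   transvections, so the function is determined by its value at [p]. *)

Lemma F2_cases (z : 'F_2) : z = 0 \/ z = 1.
Proof. by case: z => [[|[|//]]] Hz; [left|right]; apply/val_inj. Qed.

Lemma F2_addrr (z : 'F_2) : z + z = 0.
Proof. by apply: addrr_pchar2; apply: pchar_Fp. Qed.

Lemma F2_addvv (U : lmodType 'F_2) (x : U) : x + x = 0.
Proof. by rewrite -[x]scale1r -scalerDl F2_addrr scale0r. Qed.

Lemma F2_addKv (U : lmodType 'F_2) (x y : U) : x + (x + y) = y.
Proof. by rewrite addrA F2_addvv add0r. Qed.

Lemma sgn2D1 (z : 'F_2) : sgn2 (z + 1) = - sgn2 z.
Proof.
by rewrite /sgn2; case: (F2_cases z) => ->; rewrite ?add0r ?F2_addrr ?eqxx ?opprK.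
Qed.

Lemma card_rowspace (F : finFieldType) m n (W : 'M[F]_(m, n)) :
  #|[pred a : 'rV[F]_n | (a <= W)%MS]| = (#|F| ^ \rank W)%N.
Proof.
pose f (c : 'rV[F]_(\rank W)) := c *m row_base W.
have f_inj : injective f by apply/row_free_inj/row_base_free.
rewrite -[\rank W]mul1n -card_mx -(card_codom f_inj).
apply: eq_card => a; rewrite inE -(eq_row_base W).
by apply/submxP/codomP => -[D ->]; exists D.
Qed.

Lemma bNE (x y : AN) : bN x y =
  x 0 0 * y 0 1 + x 0 1 * y 0 0 + x 0 2 * y 0 3 + x 0 3 * y 0 2
  + x 0 4 * y 0 5 + x 0 5 * y 0 4.
Proof. rewrite /bN /qN !mxE; ring. Qed.

Lemma qND (x y : AN) : qN (x + y) = qN x + qN y + bN x y.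
Proof. rewrite /bN; ring. Qed.

Lemma bNC (x y : AN) : bN x y = bN y x.
Proof. by rewrite !bNE; ring. Qed.

Lemma bNDl (x y z : AN) : bN (x + y) z = bN x z + bN y z.
Proof. by rewrite !bNE !mxE; ring. Qed.

Lemma bNDr (x y z : AN) : bN z (x + y) = bN z x + bN z y.
Proof. by rewrite bNC bNDl !(bNC z). Qed.

Lemma bNZl (c : 'F_2) (x z : AN) : bN (c *: x) z = c * bN x z.
Proof. by rewrite !bNE !mxE; ring. Qed.

Lemma bNxx (x : AN) : bN x x = 0.
Proof. by rewrite /bN F2_addvv /qN !mxE !mul0r !addr0 sub0r -opprD F2_addrr oppr0. Qed.

Lemma bNx0 (x : AN) : bN x 0 = 0.
Proof. by rewrite bNE !mxE; ring. Qed.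

Lemma bN_shift (x y a : AN) : bN x y = bN x (y + a) + bN x a.
Proof. by rewrite bNDr -addrA F2_addrr addr0. Qed.

Lemma transvK (al : AN) : involutive (transv al).
Proof.
move=> x; rewrite /transv bNDl bNZl bNxx mulr0 addr0 -addrA.
by rewrite F2_addvv addr0.
Qed.

Lemma bN_sum_delta (x y : AN) : bN x y = \sum_(j < 6) y 0 j * bN x (delta_mx 0 j).
Proof.
rewrite {1}(row_sum_delta y) (big_morph (bN x) (fun a b => bNDr a b x) (bNx0 x)).
by apply: eq_bigr => j _; rewrite bNC bNZl bNC.
Qed.

Definition gram : 'M['F_2]_6 := \matrix_(j, k) bN (delta_mx 0 j) (delta_mx 0 k).

Lemma mul_gram (x : AN) k : (x *m gram) 0 k = bN x (delta_mx 0 k).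
Proof. by rewrite mxE bNC bN_sum_delta; apply: eq_bigr => j _; rewrite mxE bNC. Qed.

Lemma bN_nondegenerate (x : AN) : (forall k, bN x (delta_mx 0 k) = 0) -> x = 0.
Proof.
move=> x_perp; apply/rowP => j; rewrite mxE.
have := x_perp 0; have := x_perp 1; have := x_perp 2.
have := x_perp 3; have := x_perp 4; have := x_perp 5.
rewrite !bNE !mxE /= !(mulr0, mulr1, addr0, add0r) => x4 x5 x2 x3 x0 x1.
case: j => [[|[|[|[|[|[|//]]]]]] j_lt6];
  [rewrite -[RHS]x0 | rewrite -[RHS]x1 | rewrite -[RHS]x2
  | rewrite -[RHS]x3 | rewrite -[RHS]x4 | rewrite -[RHS]x5];
  by congr (x 0 _); apply/val_inj.
Qed.

Lemma gram_free : row_free gram.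
Proof.
rewrite -kermx_eq0; apply/eqP/row_matrixP => i; rewrite row0.
apply: bN_nondegenerate => k; rewrite -mul_gram -row_mul mulmx_ker row0.
by rewrite mxE.
Qed.

Lemma mul_gram_tr (W : 'M['F_2]_6) (z : AN) i :
  (z *m (gram *m W^T)) 0 i = bN z (row i W).
Proof.
rewrite mulmxA mxE [RHS]bN_sum_delta; apply: eq_bigr => k _.
by rewrite mul_gram !mxE mulrC.
Qed.

Definition bN_isotropic (W : 'M['F_2]_6) :=
  forall x y : AN, (x <= W)%MS -> (y <= W)%MS -> bN x y = 0.

Lemma isotropic3_orthogonal_sub (W : 'M['F_2]_6) (b : AN) :
  \rank W = 3%N -> bN_isotropic W ->
  (forall a : AN, (a <= W)%MS -> bN b a = 0) -> (b <= W)%MS.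
Proof.
move=> rW isoW b_perp; set K := kermx (gram *m W^T).
have rK : \rank K = 3%N.
  rewrite mxrank_ker -mxrank_tr trmx_mul trmxK mxrankMfree ?rW //.
  by rewrite row_free_unit unitmx_tr -row_free_unit gram_free.
have perpK (z : AN) : (forall i, bN z (row i W) = 0) -> (z <= K)%MS.
  by move=> z_perp; apply/sub_kermxP/rowP => i; rewrite mul_gram_tr mxE z_perp.
have WK : (W <= K)%MS.
  by apply/row_subP => i; apply: perpK => j; rewrite isoW ?row_sub.
have KW : (K <= W)%MS by rewrite -(geq_leqif (mxrank_leqif_sup WK)) rK rW.
by apply: submx_trans KW; apply: perpK => i; rewrite b_perp ?row_sub.
Qed.

Lemma max_tot_isotropic_bN (W : 'M['F_2]_6) :
  max_tot_isotropic W -> bN_isotropic W.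
Proof. by move=> [_ qW] x y Wx Wy; rewrite /bN !qW ?addmx_sub // !subr0. Qed.

Lemma max_tot_isotropic_orth (W : 'M['F_2]_6) (b : AN) : max_tot_isotropic W ->
  ~~ (b <= W)%MS -> exists2 a : AN, (a <= W)%MS & bN b a = 1.
Proof.
move=> HW bW.
case: (pickP [pred a : AN | (a <= W)%MS && (bN b a == 1)]) => [a /andP[Wa /eqP]|no_a].
  by exists a.
case/negP: bW; apply: isotropic3_orthogonal_sub (proj1 HW) (max_tot_isotropic_bN HW) _.
move=> a Wa; case: (F2_cases (bN b a)) => // ba.
by have := no_a a; rewrite /= Wa ba eqxx.
Qed.

Lemma sum_sgn2_bN (W : 'M['F_2]_6) (b : AN) : max_tot_isotropic W ->
  \sum_(a : AN | (a <= W)%MS) sgn2 (bN b a) = if (b <= W)%MS then 8 else 0.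
Proof.
move=> HW; case: ifP => [Wb|/negbT /(max_tot_isotropic_orth HW) [a0 Wa0 b_a0]].
  rewrite (eq_bigr (fun _ => 1)) => [|a Wa]; last first.
    by rewrite (max_tot_isotropic_bN HW) // /sgn2 eqxx.
  by rewrite sumr_const card_rowspace card_Fp // (proj1 HW).
apply/eqP; rewrite -eqNr; apply/eqP.
rewrite -sumrN [RHS](reindex_inj (addIr a0)) /=.
apply: eq_big => [a|a _]; last by rewrite bNDr b_a0 sgn2D1.
apply/idP/idP => [Wa|Wa_a0]; first by rewrite addmx_sub.
by rewrite -[a](F2_addKv a0) addrC addmx_sub // addrC.
Qed.

Lemma fV_SL2Z_invariant (Wp Wm : 'M['F_2]_6) :
  max_tot_isotropic Wp -> max_tot_isotropic Wm -> SL2Z_invariant (fV Wp Wm).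
Proof.
move=> Hp Hm; split; apply/ffunP => b; rewrite !ffunE.
  under eq_bigr do rewrite ffunE mulrBr !(fun_if (GRing.mul _)) !mulr1 !mulr0.
  rewrite sumrB -!big_mkcond !sum_sgn2_bN //= mulrBr.
  have inv8 : (8%:R : algC)^-1 * 8%:R = 1 by rewrite mulVf // pnatr_eq0.
  by case: ifP; case: ifP; rewrite ?mulr0 ?inv8.
case: ifP => [Wp_b|_]; first by rewrite (proj2 Hp) // /sgn2 eqxx mul1r.
case: ifP => [Wm_b|_]; first by rewrite (proj2 Hm) // /sgn2 eqxx mul1r.
by rewrite subr0 mulr0.
Qed.

Lemma max_tot_singular_rank (V : 'M['F_2]_6) : max_tot_singular V -> \rank V = 3%N.
Proof. by move=> [phi [phi_free /eqmxP <- _]]; apply/eqP. Qed.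

Lemma max_tot_singular_bN (V : 'M['F_2]_6) : max_tot_singular V -> bN_isotropic V.
Proof.
move=> [phi [_ /eqmxP eqV qphi]] x y.
rewrite -!eqV => /submxP [a ->] /submxP [b ->].
by rewrite /bN -mulmxDl !qphi !mxE; ring.
Qed.

Lemma max_tot_singular_anisotropic (V : 'M['F_2]_6) : max_tot_singular V ->
  exists2 al : AN, (al <= V)%MS & qN al = 1.
Proof.
move=> [phi [_ /eqmxP eqV qphi]]; exists (delta_mx 0 0 *m phi).
  by rewrite -eqV submxMl.
by rewrite qphi !mxE /= !addr0.
Qed.

Lemma max_tot_singular_kerq (V : 'M['F_2]_6) : max_tot_singular V ->
  exists I : 'M['F_2]_(3, 6),
    [/\ \rank I = 2%N, (I <= V)%MS & forall i, qN (row i I) = 0].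
Proof.
move=> [phi [phi_free /eqmxP eqV qphi]].
pose s : 'cV['F_2]_3 := const_mx 1.
have rank_s : \rank s = 1%N.
  apply/eqP; rewrite eqn_leq rank_leq_col lt0n mxrank_eq0.
  by apply/eqP => /matrixP /(_ 0 0); rewrite !mxE => /eqP; rewrite oner_eq0.
have mul_s (a : 'rV_3) : (a *m s) 0 0 = a 0 0 + a 0 1 + a 0 2.
  rewrite mxE !big_ord_recl big_ord0 !mxE !mulr1 addr0 addrA.
  by congr (_ + a 0 _ + a 0 _); apply/val_inj.
exists (kermx s *m phi); split.
- by rewrite mxrankMfree // mxrank_ker rank_s.
- by rewrite -eqV submxMl.
- by move=> i; rewrite row_mul qphi -mul_s -row_mul mulmx_ker row0 mxE.
Qed.

Definition bN_one_on_anisotropic (V : 'M['F_2]_6) (x : AN) :=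
  forall a : AN, (a <= V)%MS -> qN a = 1 -> bN x a = 1.

Section MaximalTotallySingular.

Variable V : 'M['F_2]_6.
Hypothesis HV : max_tot_singular V.

Lemma max_tot_singular_orth_sub (al x : AN) : (al <= V)%MS -> qN al = 1 ->
  (forall y : AN, (y <= V)%MS -> qN y = 0 -> bN x y = 0) -> bN x al = 0 ->
  (x <= V)%MS.
Proof.
move=> alV qal x_kerq x_al.
apply: isotropic3_orthogonal_sub (max_tot_singular_rank HV) (max_tot_singular_bN HV) _.
move=> a Va; case: (F2_cases (qN a)) => qa; first exact: x_kerq.
have q_a_al : qN (a + al) = 0.
  by rewrite qND qa qal (max_tot_singular_bN HV Va alV) addr0 F2_addrr.
by rewrite (bN_shift x a al) x_kerq ?addmx_sub // x_al addr0.
Qed.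

Lemma bN_one_kerq (x : AN) : bN_one_on_anisotropic V x ->
  forall y : AN, (y <= V)%MS -> qN y = 0 -> bN x y = 0.
Proof.
move=> x_one y Vy qy; have [al alV qal] := max_tot_singular_anisotropic HV.
have q_y_al : qN (y + al) = 1.
  by rewrite qND qy qal (max_tot_singular_bN HV Vy alV) add0r addr0.
by rewrite (bN_shift x y al) !x_one ?addmx_sub // F2_addrr.
Qed.

Lemma bN_one_addr_sub (x z : AN) :
  bN_one_on_anisotropic V x -> bN_one_on_anisotropic V z -> ((x + z)%R <= V)%MS.
Proof.
move=> x_one z_one; have [al alV qal] := max_tot_singular_anisotropic HV.
apply: (max_tot_singular_orth_sub alV qal) => [y Vy qy|].
  by rewrite bNDl !bN_one_kerq // addr0.
by rewrite bNDl x_one // z_one // F2_addrr.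
Qed.

Lemma max_tot_isotropic_kerq_bN (W : 'M['F_2]_6) (w y : AN) :
  max_tot_isotropic W -> contains_kerq V W ->
  (w <= W)%MS -> (y <= V)%MS -> qN y = 0 -> bN w y = 0.
Proof. by move=> HW kerW Ww Vy qy; apply: (max_tot_isotropic_bN HW Ww (kerW _ Vy qy)). Qed.

Lemma max_tot_isotropic_bN_one (W : 'M['F_2]_6) (w : AN) :
  max_tot_isotropic W -> contains_kerq V W ->
  (w <= W)%MS -> ~~ (w <= V)%MS -> bN_one_on_anisotropic V w.
Proof.
move=> HW kerW Ww /negP Vw al alV qal.
case: (F2_cases (bN w al)) => // w_al; case: Vw.
apply: (max_tot_singular_orth_sub alV qal) => // y.
exact: max_tot_isotropic_kerq_bN HW kerW Ww.
Qed.

Section TwoLagrangians.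

Variables W1 W2 : 'M['F_2]_6.
Hypotheses (HW1 : max_tot_isotropic W1) (HW2 : max_tot_isotropic W2).
Hypotheses (kerW1 : contains_kerq V W1) (kerW2 : contains_kerq V W2).
Hypothesis W12 : ~~ (W1 == W2)%MS.

(* [W1 :&: W2] is [I]: it contains the rank-2 space [I] and is proper in [W1]. *)
Lemma capmx_sub_max_tot_singular (w : AN) :
  (w <= W1)%MS -> (w <= W2)%MS -> (w <= V)%MS.
Proof.
move=> W1w W2w; have [I [rankI IV qI]] := max_tot_singular_kerq HV.
have IW (W : 'M['F_2]_6) : contains_kerq V W -> (I <= W)%MS.
  move=> kerW; apply/row_subP => i; apply: kerW (qI i).
  exact: submx_trans (row_sub i I) IV.
have I_cap : (I <= W1 :&: W2)%MS by rewrite sub_capmx !IW.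
have rank_cap : (\rank (W1 :&: W2) <= 2)%N.
  rewrite leqNgt; apply: contra W12 => rank_gt2.
  have W1_cap : (W1 <= W1 :&: W2)%MS.
    by rewrite -(geq_leqif (mxrank_leqif_sup (capmxSl W1 W2))) (proj1 HW1).
  have W12_sub : (W1 <= W2)%MS := submx_trans W1_cap (capmxSr _ _).
  by rewrite W12_sub -(geq_leqif (mxrank_leqif_sup W12_sub)) (proj1 HW1) (proj1 HW2) /=.
have cap_I : (W1 :&: W2 <= I)%MS by rewrite -(geq_leqif (mxrank_leqif_sup I_cap)) rankI.
by apply: submx_trans IV; apply: submx_trans cap_I; rewrite sub_capmx W1w.
Qed.

Lemma bN_outside_max_tot_singular (x w : AN) :
  (x <= W1)%MS -> ~~ (x <= V)%MS -> (w <= W2)%MS -> ~~ (w <= V)%MS -> bN x w = 1.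
Proof.
move=> W1x Vx W2w Vw; case: (F2_cases (bN x w)) => // x_w.
have [al alV qal] := max_tot_singular_anisotropic HV.
have x_one := max_tot_isotropic_bN_one HW1 kerW1 W1x Vx.
have w_one := max_tot_isotropic_bN_one HW2 kerW2 W2w Vw.
have V_xw := bN_one_addr_sub x_one w_one.
have q_xw : qN (x + w) = 0 by rewrite qND x_w (proj2 HW1 _ W1x) (proj2 HW2 _ W2w) !addr0.
have W2x : (x <= W2)%MS.
  by rewrite -[x](F2_addKv w) addrC addmx_sub // addrC kerW2.
by case/negP: Vx; apply: capmx_sub_max_tot_singular.
Qed.

Lemma max_tot_isotropic_fixed_sub (al x : AN) : (al <= V)%MS -> qN al = 1 ->
  bN x al = 0 -> (x <= W1)%MS -> (x <= W2)%MS.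
Proof.
move=> alV qal x_al W1x; apply: kerW2 (proj2 HW1 _ W1x).
apply: (max_tot_singular_orth_sub alV qal) => // y.
exact: max_tot_isotropic_kerq_bN HW1 kerW1 W1x.
Qed.

Lemma max_tot_isotropic_moved_sub (al x : AN) : (al <= V)%MS -> qN al = 1 ->
  bN x al = 1 -> (x <= W1)%MS -> ((x + al)%R <= W2)%MS.
Proof.
move=> alV qal x_al W1x.
apply: isotropic3_orthogonal_sub (proj1 HW2) (max_tot_isotropic_bN HW2) _ => w W2w.
rewrite bNDl; have [Vw|Vw] := boolP (w <= V)%MS.
  rewrite (max_tot_isotropic_bN HW1 W1x (kerW1 Vw (proj2 HW2 _ W2w))).
  by rewrite (max_tot_singular_bN HV alV Vw) addr0.
have Vx : ~~ (x <= V)%MS.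
  by apply: contra_eqN x_al => Vx; rewrite (max_tot_singular_bN HV Vx alV) eq_sym oner_eq0.
rewrite bN_outside_max_tot_singular // bNC.
by rewrite (max_tot_isotropic_bN_one HW2 kerW2 W2w Vw alV qal) F2_addrr.
Qed.

End TwoLagrangians.

Definition transv_anti (h : CA) :=
  forall al : AN, (al <= V)%MS -> qN al = 1 -> forall x, h (transv al x) = - h x.

Lemma fV_transv_anti (Wp Wm : 'M['F_2]_6) :
  max_tot_isotropic Wp -> max_tot_isotropic Wm ->
  contains_kerq V Wp -> contains_kerq V Wm -> ~~ (Wp == Wm)%MS ->
  transv_anti (fV Wp Wm).
Proof.
move=> Hp Hm kerp kerm Wpm al alV qal x.
rewrite !ffunE /transv; case: (F2_cases (bN x al)) => x_al; rewrite x_al.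
  rewrite scale0r addr0; suff -> : (x <= Wp)%MS = (x <= Wm)%MS by rewrite subrr oppr0.
  by apply/idP/idP; apply: max_tot_isotropic_fixed_sub alV qal x_al.
have xal_al : bN (x + al) al = 1 by rewrite bNDl x_al bNxx addr0.
have moved_sub Wa Wb : max_tot_isotropic Wa -> max_tot_isotropic Wb ->
    contains_kerq V Wa -> contains_kerq V Wb -> ~~ (Wa == Wb)%MS ->
    ((x + al)%R <= Wa)%MS = (x <= Wb)%MS.
  move=> Ha Hb kera kerb Wab; have Wba : ~~ (Wb == Wa)%MS by rewrite andbC.
  apply/idP/idP => [Wa_xal|Wb_x].
    have -> : x = (x + al) + al by rewrite -addrA F2_addvv addr0.
    exact: max_tot_isotropic_moved_sub Ha Hb kera kerb Wab _ _ alV qal xal_al Wa_xal.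
  exact: max_tot_isotropic_moved_sub Hb Ha kerb kera Wba _ _ alV qal x_al Wb_x.
have Wmp : ~~ (Wm == Wp)%MS by rewrite andbC.
by rewrite scale1r (moved_sub Wp Wm) // (moved_sub Wm Wp) // opprB.
Qed.

Lemma transv_anti_orth (h : CA) (al x : AN) : transv_anti h ->
  (al <= V)%MS -> qN al = 1 -> bN x al = 0 -> h x = 0.
Proof.
move=> h_anti alV qal x_al; apply/eqP; rewrite -eqNr.
by rewrite -{1}(h_anti al alV qal x) /transv x_al scale0r addr0.
Qed.

(* [p + v] is reached from [p] by one transvection, [t_v], if [v] is anisotropic,
   and by two, [t_(v + al)] after [t_al], if [v] is singular. *)
Lemma transv_anti_translate (h : CA) (p v : AN) : transv_anti h ->
  bN_one_on_anisotropic V p -> (v <= V)%MS -> h (p + v) = sgn2 (qN v) * h p.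
Proof.
move=> h_anti p_one Vv; rewrite /sgn2; case: (F2_cases (qN v)) => qv; rewrite qv.
  have [al alV qal] := max_tot_singular_anisotropic HV.
  have V_val : ((v + al)%R <= V)%MS by rewrite addmx_sub.
  have q_val : qN (v + al) = 1.
    by rewrite qND qv qal (max_tot_singular_bN HV Vv alV) add0r addr0.
  have t_al_p : transv al p = p + al by rewrite /transv p_one // scale1r.
  have t_val : transv (v + al) (p + al) = p + v.
    rewrite /transv bNDl p_one // (max_tot_singular_bN HV alV V_val) addr0 scale1r.
    by rewrite addrCA -addrA F2_addvv addr0 addrC.
  by rewrite eqxx mul1r -t_val h_anti // -t_al_p h_anti // opprK.
rewrite (negbTE (oner_neq0 _)) mulN1r -(h_anti v Vv qv).
by rewrite /transv p_one // scale1r.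
Qed.

Lemma transv_anti_unique (g h : CA) (p : AN) : transv_anti g -> transv_anti h ->
  bN_one_on_anisotropic V p -> h p = 1 -> g = [ffun x => g p * h x].
Proof.
move=> g_anti h_anti p_one hp1; apply/ffunP => x; rewrite ffunE.
case: (pickP [pred a : AN | [&& (a <= V)%MS, qN a == 1 & bN x a == 0]]).
  move=> a /and3P[Va /eqP qa /eqP x_a].
  by rewrite (transv_anti_orth g_anti Va qa x_a) (transv_anti_orth h_anti Va qa x_a) mulr0.
move=> no_orth; have x_one : bN_one_on_anisotropic V x.
  move=> a Va qa; case: (F2_cases (bN x a)) => // x_a.
  by have := no_orth a; rewrite /= Va qa x_a !eqxx.
have V_px := bN_one_addr_sub p_one x_one.
by rewrite -(F2_addKv p x) !transv_anti_translate // hp1 mulr1 mulrC.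
Qed.

End MaximalTotallySingular.

Lemma actA_transv (al : AN) (g : CA) :
  actA (transv al) g = [ffun b => g (transv al b)].
Proof.
apply/ffunP => b; rewrite !ffunE (big_pred1 (transv al b)) // => a /=.
by apply/eqP/eqP => [<-|->]; rewrite transvK.
Qed.

Lemma actA_transv_oppE (V : 'M['F_2]_6) (g : CA) :
  (forall al : AN, (al <= V)%MS -> qN al = 1 -> actA (transv al) g = - g)
  <-> transv_anti V g.
Proof.
split=> g_anti al alV qal.
  by move=> x; have /ffunP/(_ x) := g_anti al alV qal; rewrite actA_transv !ffunE.
by apply/ffunP => x; rewrite actA_transv !ffunE g_anti.
Qed.

Theorem theorem5p4 (V Wp Wm : 'M['F_2]_6) :
  max_tot_singular V ->
  max_tot_isotropic Wp -> max_tot_isotropic Wm ->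
  contains_kerq V Wp -> contains_kerq V Wm -> ~~ (Wp == Wm)%MS ->
  SL2Z_invariant (fV Wp Wm) /\
  (forall g : CA,
     (forall al : AN, (al <= V)%MS -> qN al = 1 -> actA (transv al) g = - g)
     <-> exists c : algC, g = [ffun a => c * fV Wp Wm a]).
Proof.
move=> HV Hp Hm kerp kerm Wpm; split; first exact: fV_SL2Z_invariant.
have [p Wp_p Wm_p] : exists2 p : AN, (p <= Wp)%MS & ~~ (p <= Wm)%MS.
  have /row_subPn[i Wm_i] : ~~ (Wp <= Wm)%MS.
    apply: contra Wpm => Wpm_sub; rewrite Wpm_sub.
    by rewrite -(geq_leqif (mxrank_leqif_sup Wpm_sub)) (proj1 Hp) (proj1 Hm).
  by exists (row i Wp); rewrite ?row_sub.
have Vp : ~~ (p <= V)%MS.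
  by apply: contra Wm_p => Vp; apply: kerm Vp (proj2 Hp _ Wp_p).
have p_one := max_tot_isotropic_bN_one HV Hp kerp Wp_p Vp.
have fV_anti := fV_transv_anti HV Hp Hm kerp kerm Wpm.
have fV_p : fV Wp Wm p = 1 by rewrite ffunE Wp_p (negbTE Wm_p) subr0.
move=> g; rewrite actA_transv_oppE; split => [g_anti|[c ->] al alV qal x].
  by exists (g p); apply: transv_anti_unique g_anti fV_anti p_one fV_p.
by rewrite ffunE [in RHS]ffunE fV_anti // mulrN.
Qed.
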